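(* Let $X$ be a random variable uniformly distributed in $[0,1)$. For any sequence $\mathrm{a}=(a_n)_{n\ge1}$ of positive integers and any sequence $\mathrm{r}=(r_n)_{n\ge1}$ of reals in $(0,1]$, $$\Theta((\{a_nX\})_{n\ge1},\mathcal{B}(\mathrm{r}))\le 3\exp\left(4\sum_{n=1}^\infty\frac{a_n}{r_na_{n+1}}\right).$$
   Context: $\{\cdot\}$ is the fractional part, viewed as the projection $\mathbb{R}\to\mathbb{T}=\mathbb{R}/\mathbb{Z}$. For a sequence $\mathrm{X}=(X_n)$ of random points of $\mathbb{T}$ and a sequence $\mathrm{B}=(B_n)$ of Borel subsets of $\mathbb{T}$ of positive Lebesgue measure, $\theta(\mathrm{X},\mathrm{B})=\sup_{n\ge1}\frac{\mathbb{P}(X_1\in B_1,\dots,X_n\in B_n)}{\prod_{i=1}^n\mathbb{P}(X_i\in B_i)}$ and $\Theta(\mathrm{X},\mathcal{B})=\sup_{\mathrm{B}\in\mathcal{B}}\theta(\mathrm{X},\mathrm{B})$. With $q_n=\lceil1/r_n\rceil$ and $I_{n,k}$ the image of $[k/q_n,(k+1)/q_n)$ in $\mathbb{T}$ for $0\le k<q_n$, $\mathcal{B}(\mathrm{r})$ is the collection of all sequences $(I_{n,k_n})_{n\ge1}$ with integers $0\le k_n<q_n$. *)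

From HB Require Import structures.
From mathcomp Require Import all_boot all_order all_algebra.
From mathcomp Require Import all_classical all_reals all_analysis.
Set Implicit Arguments. Unset Strict Implicit. Unset Printing Implicit Defensive.
Import Order.TTheory GRing.Theory Num.Theory.
Local Open Scope classical_set_scope.
Local Open Scope ring_scope.

Section Defs.
Context (R : realType).

(* fractional part {x} in [0,1); R/Z is represented by [0,1) *)
Definition fracpart (x : R) : R := x - (Num.floor x)%:~R.

Definition qn (r : nat -> R) (n : nat) : int := Num.ceil (r n)^-1.

(* I_{n,k} = image of [k/q_n, (k+1)/q_n) in T, seen as a subset of [0,1) *)
Definition Ink (r : nat -> R) (n : nat) (k : int) : set R :=
  [set y | (k%:~R / (qn r n)%:~R <= y) && (y < (k + 1)%:~R / (qn r n)%:~R)].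

(* B(r): sequences (I_{n,k_n})_{n>=1} with 0 <= k_n < q_n; encoded by k *)
Definition admissible (r : nat -> R) (k : nat -> int) : Prop :=
  forall n, (1 <= n)%N -> 0 <= k n < qn r n.

Context {d : measure_display} {T : measurableType d} (P : probability T R).

Definition joint_prob (X : nat -> T -> R) (B : nat -> set R) (n : nat) : \bar R :=
  P [set w | forall i, (1 <= i <= n)%N -> B i (X i w)].

Definition marg_prob (X : nat -> T -> R) (B : nat -> set R) (i : nat) : \bar R :=
  P [set w | B i (X i w)].

Definition theta (X : nat -> T -> R) (B : nat -> set R) : \bar R :=
  ereal_sup [set ((fine (joint_prob X B n)) /
                  \prod_(1 <= i < n.+1) fine (marg_prob X B i))%:E
            | n in [set n : nat | (1 <= n)%N]].

Definition Theta_r (X : nat -> T -> R) (r : nat -> R) : \bar R :=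
  ereal_sup [set theta X (fun n => Ink r n (k n)) | k in admissible r].

End Defs.

From HB Require Import structures.
From mathcomp Require Import all_boot all_order all_algebra.
From mathcomp Require Import all_classical all_reals all_analysis.
From mathcomp Require Import ring lra zify.
Import Order.TTheory GRing.Theory Num.Theory.
Local Open Scope classical_set_scope.
Local Open Scope ring_scope.

(* For x uniform in [0,1), the event {a_i x} in I_{i,k_i} says that x lies
   in a window: a union of pieces of length 1/(a_i q_i), one for each integer
   part of a_i x.  A piece of level i meets at most a_(i+1)/(a_i q_i) + 2
   pieces of level i+1, so inducting from the last level the joint probability
   is at most (a_1 + 2)/a_1 prod_i q_i^-1 prod_i (1 + 2 a_i q_i / a_(i+1)),
   hence at most 3 prod_i q_i^-1 exp (sum_i 2 a_i q_i / a_(i+1)).  Since a_i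
   is an integer, each marginal probability is at least 1/q_i, and q_i <= 2/r_i. *)

Section Windows.
Context {R : realType}.
Local Notation lam := (@lebesgue_measure R).
Implicit Types (a c w x : R) (m : int).

Definition window a c w : set R := [set x | c <= fracpart (a * x) < c + w].

Definition window_piece a c w m : set R := [set x | c <= a * x - m%:~R < c + w].

Lemma window_pieceE a c w m : 0 < a ->
  window_piece a c w m = `[(m%:~R + c) / a, (m%:~R + c + w) / a[%classic.
Proof.
move=> a0; apply/seteqP; split => x /=; rewrite in_itv /=;
  rewrite !ler_pdivrMr // ?ltr_pdivlMr // ?ler_pdivlMr // ?ltr_pdivrMr //;
  by move=> /andP[h1 h2]; apply/andP; split; lra.
Qed.

Lemma floor_window_piece {a c w m x} : 0 <= c -> c + w <= 1 ->
  window_piece a c w m x -> Num.floor (a * x) = m.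
Proof.
move=> c0 cw /andP[h1 h2]; apply: floor_def; rewrite intrD; apply/andP; split; lra.
Qed.

Lemma window_piece_floor a c w x :
  window a c w x -> window_piece a c w (Num.floor (a * x)) x.
Proof. by []. Qed.

Lemma window_piece_sub {a c w m} : 0 <= c -> c + w <= 1 ->
  window_piece a c w m `<=` window a c w.
Proof.
by move=> c0 cw x px; rewrite /window /= /fracpart (floor_window_piece c0 cw px).
Qed.

Lemma window_bigcup a c w : 0 <= c -> c + w <= 1 ->
  window a c w = \bigcup_(i in setT)
    (window_piece a c w (Posz i) `|` window_piece a c w (Negz i)).
Proof.
move=> c0 cw; apply/seteqP; split => x.
  move=> /window_piece_floor; case: (Num.floor (a * x)) => [i|i] px.
  - by exists i => //; left.
  - by exists i => //; right.
by move=> [i _ [] px]; exact: window_piece_sub c0 cw _ px.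
Qed.

Lemma measurable_window_piece a c w m : 0 < a -> measurable (window_piece a c w m).
Proof. by move=> a0; rewrite window_pieceE. Qed.

Lemma measurable_window a c w : 0 < a -> 0 <= c -> c + w <= 1 ->
  measurable (window a c w).
Proof.
move=> a0 c0 cw; rewrite window_bigcup //; apply: bigcup_measurable => i _.
by apply: measurableU; apply: measurable_window_piece.
Qed.

Lemma lebesgue_window_piece a c w m : 0 < a -> 0 < w ->
  lam (window_piece a c w m) = (w / a)%:E.
Proof.
move=> a0 w0; rewrite window_pieceE // lebesgue_measure_itv /= lte_fin.
rewrite ltr_pM2r ?invr_gt0 // ltrDl w0 -EFinD; congr (_%:E).
by rewrite -mulrBl; congr (_ * _); ring.
Qed.

(* [u, v] meets at most (v - u) a + 2 pieces of the window. *)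
Lemma lebesgue_windowI_le a c w (u v b : R) (Q S : set R) :
  0 < a -> 0 <= c -> c + w <= 1 -> 0 <= b -> u <= v ->
  measurable Q -> measurable S -> Q `<=` `[u, v]%classic ->
  (forall m, (lam (window_piece a c w m `&` S) <= b%:E)%E) ->
  (lam (Q `&` (window a c w `&` S)) <= (((v - u) * a + 2) * b)%:E)%E.
Proof.
move=> a0 c0 cw b0 uv mQ mS Quv piece_le.
set m0 := Num.floor (a * u); set m1 := Num.floor (a * v).
have m01 : m0 <= m1 by apply: le_floor; rewrite ler_pM2l.
set N := `|(m1 - m0 + 1)%R|%N.
have cover : Q `&` (window a c w `&` S) `<=`
    \big[setU/set0]_(i < N) (window_piece a c w (m0 + i%:Z) `&` S).
  move=> x [Qx [Wx Sx]].
  rewrite -(bigcup_mkord N (fun i => window_piece a c w (m0 + i%:Z) `&` S)).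
  have /andP[ux xv] : u <= x <= v by have := Quv x Qx; rewrite /= in_itv.
  have h0 : m0 <= Num.floor (a * x) by apply: le_floor; rewrite ler_pM2l.
  have h1 : Num.floor (a * x) <= m1 by apply: le_floor; rewrite ler_pM2l.
  exists `|(Num.floor (a * x) - m0)%R|%N; first by rewrite /= /N; lia.
  split => //.
  have -> : m0 + (`|(Num.floor (a * x) - m0)%R|%N)%:Z = Num.floor (a * x).
    by rewrite gez0_abs ?subr_ge0 //; ring.
  exact: window_piece_floor.
have N_le : (N%:R : R) <= (v - u) * a + 2.
  have -> : (N%:R : R) = (m1 - m0 + 1)%:~R by rewrite natr_absz ger0_norm //; lia.
  rewrite !intrD intrN.
  by have := floor_le (a * v); have := floorD1_gt (a * u); rewrite intrD; lra.
apply: le_trans (content_subadditive lam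
  (F := fun i => window_piece a c w (m0 + i%:Z) `&` S) _ _ cover) _.
- by move=> i _; apply: measurableI => //; apply: measurable_window_piece.
- by apply: measurableI => //; apply: measurableI => //; apply: measurable_window.
apply: (@le_trans _ _ (\sum_(i < N) b%:E)%E); first by apply: lee_sum => i _; exact: piece_le.
rewrite sumEFin sumr_const card_ord lee_fin -[b *+ N]mulr_natl.
by rewrite ler_wpM2r.
Qed.

Lemma lebesgue_window_natr_ge (n : nat) c w : (0 < n)%N -> 0 <= c -> 0 < w ->
  c + w <= 1 -> (w%:E <= lam (window n%:R c w `&` `[0%R, 1%R]%classic))%E.
Proof.
move=> n0 c0 w0 cw.
have nR : (0 : R) < n%:R by rewrite ltr0n.
pose F (i : 'I_n) := window_piece n%:R c w i%:Z.
have mF i : measurable (F i) by apply: measurable_window_piece.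
have F_sub : \big[setU/set0]_(i < n) F i `<=` window n%:R c w `&` `[0%R, 1%R]%classic.
  move=> x; rewrite -(bigcup_mkord n (fun i => window_piece n%:R c w i%:Z)).
  move=> [i /= ltin px]; split; first exact: window_piece_sub c0 cw _ px.
  move: px => /andP[h1 h2].
  have hin : i%:R + 1 <= (n%:R : R) by rewrite natr1 ler_nat.
  rewrite /= in_itv /=; apply/andP; split.
    by rewrite -(pmulr_rge0 _ nR); have : (0 : R) <= i%:R by []; lra.
  by rewrite -(ler_pM2l nR) mulr1; lra.
have F_disj : trivIset setT F.
  move=> i j _ _ [x [Fi Fj]].
  have := floor_window_piece c0 cw Fi; have := floor_window_piece c0 cw Fj.
  by move=> -> [] /val_inj.
have mU : \big[setU/set0]_(i < n) F i \in measurable.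
  by rewrite inE; apply: bigsetU_measurable => i _.
have mW : window n%:R c w `&` `[0%R, 1%R]%classic \in measurable.
  by rewrite inE; apply: measurableI => //; exact: measurable_window.
apply: le_trans (le_measure lam mU mW F_sub).
rewrite (measure_bigsetU_ord lam predT mF F_disj).
rewrite (eq_bigr (fun=> (w / n%:R)%:E)); last by move=> i _; apply: lebesgue_window_piece.
by rewrite sumEFin sumr_const card_ord lee_fin -[_ *+ n]mulr_natr divfK ?gt_eqF.
Qed.

End Windows.

Definition chain_window {R : realType} (A C W : nat -> R) i := window (A i) (C i) (W i).

Definition windows {R : realType} (A C W : nat -> R) j len : set R :=
  [set x | forall i, (j <= i < j + len)%N -> chain_window A C W i x].

Fixpoint piece_bound {R : realType} (A W : nat -> R) j len : R :=
  match len with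
  | 0 => W j / A j
  | len'.+1 => (W j / A j * A j.+1 + 2) * piece_bound A W j.+1 len'
  end.

Section WindowChain.
Context {R : realType} {A C W : nat -> R}.
Local Notation lam := (@lebesgue_measure R).
Hypothesis chain_params : forall i, (1 <= i)%N ->
  [/\ 0 < A i, 0 <= C i, 0 < W i & C i + W i <= 1].

Lemma windows0 j : windows A C W j 0 = setT.
Proof. by apply/seteqP; split => x // _ i; lia. Qed.

Lemma windowsS j len :
  windows A C W j len.+1 = chain_window A C W j `&` windows A C W j.+1 len.
Proof.
apply/seteqP; split => x.
  by move=> h; split; [apply: h; lia | move=> i hi; apply: h; lia].
by move=> [h0 h] i hi; have [->|ne_ij] := eqVneq i j => //; apply: h; lia.
Qed.

Lemma measurable_chain_window i : (1 <= i)%N -> measurable (chain_window A C W i).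
Proof. by move=> /chain_params[? ? ? ?]; apply: measurable_window. Qed.

Lemma measurable_windows len j : (1 <= j)%N -> measurable (windows A C W j len).
Proof.
elim: len j => [|len IH] j j1; first by rewrite windows0.
rewrite windowsS; apply: measurableI; first exact: measurable_chain_window.
by apply: IH; lia.
Qed.

Lemma piece_bound_ge0 len j : (1 <= j)%N -> 0 <= piece_bound A W j len.
Proof.
elim: len j => [|len IH] j j1 /=; have [A0 _ W0 _] := chain_params _ j1.
  by rewrite divr_ge0 ?ltW.
have /chain_params[A0' _ _ _] : (1 <= j.+1)%N by [].
rewrite mulr_ge0 ?IH //; apply: addr_ge0 => //.
by rewrite mulr_ge0 ?divr_ge0 ?ltW.
Qed.

Lemma lebesgue_pieceI_windows_le len j m : (1 <= j)%N ->
  (lam (window_piece (A j) (C j) (W j) m `&` windows A C W j.+1 len)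
    <= (piece_bound A W j len)%:E)%E.
Proof.
elim: len j m => [|len IH] j m j1; have [A0 _ W0 _] := chain_params _ j1.
  by rewrite windows0 setIT lebesgue_window_piece.
have /chain_params[A0' C0' _ CW'] : (1 <= j.+1)%N by [].
rewrite windowsS.
set u := (m%:~R + C j) / A j; set v := (m%:~R + C j + W j) / A j.
apply: le_trans (lebesgue_windowI_le _ _ _ u v _ _ _ A0' C0' CW'
  (piece_bound_ge0 len _ (ltn0Sn j)) _ _ _ _ _) _.
- by rewrite /u /v ler_pM2r ?invr_gt0 //; lra.
- exact: measurable_window_piece.
- exact: measurable_windows.
- by rewrite window_pieceE // => x; rewrite /= !in_itv /= => /andP[-> /ltW].
- by move=> m'; apply: IH.
rewrite /= lee_fin ler_wpM2r ?piece_bound_ge0 //.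
suff -> : v - u = W j / A j by [].
by rewrite /u /v -mulrBl; congr (_ * _); ring.
Qed.

Lemma lebesgue_windows_le len :
  (lam (`[0%R, 1%R]%classic `&` windows A C W 1 len.+1)
    <= ((A 1 + 2) * piece_bound A W 1 len)%:E)%E.
Proof.
have [A0 C0 _ CW] := chain_params _ (leqnn 1).
rewrite windowsS; apply: le_trans (lebesgue_windowI_le _ _ _ 0 1 _ _ _ A0 C0 CW
  (piece_bound_ge0 len _ (ltn0Sn 0)) _ _ _ _ _) _ => //.
- exact: measurable_windows.
- by move=> m; apply: lebesgue_pieceI_windows_le.
by rewrite subr0 mul1r.
Qed.

Lemma piece_bound_le_exp len j : (1 <= j)%N ->
  piece_bound A W j len <= (\prod_(j <= i < j + len.+1) W i) / A j *
     expR (\sum_(j <= i < j + len) 2 * A i / (W i * A i.+1)).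
Proof.
elim: len j => [|len IH] j j1; have [A0 _ W0 _] := chain_params _ j1.
  by rewrite /= addn1 big_nat1 big_geq ?addn0 // expR0 mulr1.
have /chain_params[A0' _ _ _] : (1 <= j.+1)%N by [].
rewrite /= (big_ltn (_ : (j < j + len.+2)%N)); last lia.
rewrite (big_ltn (_ : (j < j + len.+1)%N)); last lia.
rewrite expRD -addSnnS -[(j + len.+1)%N]addSnnS.
set Pr := \prod_(j.+1 <= i < j.+1 + len.+1) W i.
set E := expR (\sum_(j.+1 <= i < j.+1 + len) 2 * A i / (W i * A i.+1)).
apply: le_trans (_ : (W j / A j * A j.+1 + 2) * (Pr / A j.+1 * E) <= _).
  rewrite ler_wpM2l ?IH //; apply: addr_ge0 => //.
  by rewrite mulr_ge0 ?divr_ge0 ?ltW.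
have Pr0 : 0 <= Pr.
  rewrite /Pr big_nat_cond; apply: prodr_ge0 => i /andP[/andP[hi _] _].
  by have /chain_params[_ _ /ltW ? _] : (1 <= i)%N by lia.
have E0 : 0 <= E by rewrite ltW ?expR_gt0.
have -> : (W j / A j * A j.+1 + 2) * (Pr / A j.+1 * E) =
   (W j * Pr / A j * E) * (1 + 2 * A j / (W j * A j.+1)).
  by field; apply/and3P; split; apply: lt0r_neq0.
rewrite [leRHS](_ : _ = W j * Pr / A j * E * expR (2 * A j / (W j * A j.+1)));
  last by ring.
apply: ler_wpM2l; last exact: expR_ge1Dx.
by rewrite !mulr_ge0 ?invr_ge0 // ltW.
Qed.

Lemma lebesgue_windows_le_exp len : 1 <= A 1 ->
  (lam (windows A C W 1 len.+1 `&` `[0%R, 1%R]%classic) <=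
   (3 * \prod_(1 <= i < len.+2) W i *
    expR (\sum_(1 <= i < len.+1) 2 * A i / (W i * A i.+1)))%:E)%E.
Proof.
move=> A1; rewrite setIC; apply: le_trans (lebesgue_windows_le len) _.
have := piece_bound_le_exp len 1 (leqnn 1); rewrite add1n lee_fin.
set PW := \prod_(1 <= i < len.+2) W i.
set E := expR _ => bound_le.
have PW0 : 0 <= PW.
  rewrite /PW big_nat_cond; apply: prodr_ge0 => i /andP[/andP[i1 _] _].
  by have [_ _ /ltW] := chain_params _ i1.
have E0 : 0 < E by apply: expR_gt0.
apply: le_trans (_ : (A 1 + 2) * (PW / A 1 * E) <= _).
  by rewrite ler_wpM2l //; lra.
have -> : (A 1 + 2) * (PW / A 1 * E) = PW * E * (1 + 2 / A 1).
  by field; rewrite gt_eqF //; lra.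
rewrite [leRHS](_ : _ = PW * E * 3); last by ring.
rewrite ler_wpM2l ?mulr_ge0 ?(ltW E0) //.
suff : 2 / A 1 <= 2 by lra.
by rewrite ler_pdivrMr; lra.
Qed.

End WindowChain.

Lemma uniform_probE {R : realType} (U : set R) : measurable U ->
  uniform_prob (@ltr01 R) U = lebesgue_measure (U `&` `[0%R, 1%R]%classic).
Proof.
move=> mU; rewrite /uniform_prob integral_uniform_pdf.
rewrite (eq_integral (fun=> 1%:E)); last first.
  move=> x; rewrite inE => -[_]; rewrite /= in_itv /= /uniform_pdf => ->.
  by rewrite subr0 invr1.
by rewrite integral_cst ?mul1e //; apply: measurableI.
Qed.

Lemma fine_ge_fin {R : realType} (x : \bar R) (y : R) :
  (y%:E <= x)%E -> (x < +oo)%E -> y <= fine x.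
Proof. by case: x. Qed.

Lemma fine_le_fin {R : realType} (x : \bar R) (y : R) :
  (0 <= x)%E -> (x <= y%:E)%E -> fine x <= y.
Proof. by case: x. Qed.

Lemma qn_gt0 {R : realType} (r : nat -> R) n : 0 < r n -> 0 < qn r n.
Proof. by move=> r0; rewrite ceil_gt0 invr_gt0. Qed.

Lemma qn_le {R : realType} (r : nat -> R) n : 0 < r n <= 1 -> (qn r n)%:~R <= 2 / r n.
Proof.
move=> /andP[r0 r1]; rewrite /qn; have := ceilB1_lt (r n)^-1; rewrite intrB.
have : 1 <= (r n)^-1 by rewrite invf_ge1.
lra.
Qed.

Lemma Ink_fracpartE {R : realType} (r : nat -> R) n j (b x : R) :
  Ink r n j (fracpart (b * x)) =
  window b (j%:~R / (qn r n)%:~R) ((qn r n)%:~R^-1) x.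
Proof. by rewrite /Ink /window /= intrD mulrDl mul1r. Qed.

Section Ratio.
Context {R : realType} {d : measure_display} {T : measurableType d}.
Context {P : probability T R} {X : {RV P >-> R}} {a : nat -> nat} {r : nat -> R}.
Context {k : nat -> int}.
Local Notation lam := (@lebesgue_measure R).
Hypothesis X_uniform : forall U : set R, measurable U ->
  distribution P X U = uniform_prob (@ltr01 R) U.
Hypothesis a_gt0 : forall n, (1 <= n)%N -> (0 < a n)%N.
Hypothesis r_in : forall n, (1 <= n)%N -> 0 < r n <= 1.
Hypothesis k_adm : admissible r k.

Local Notation Xa := (fun n w => fracpart ((a n)%:R * X w)).
Local Notation B := (fun n => Ink r n (k n)).

Let A i : R := (a i)%:R.
Let C i : R := (k i)%:~R / (qn r i)%:~R.
Let W i : R := ((qn r i)%:~R)^-1.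

Lemma ratio_chain_params i : (1 <= i)%N ->
  [/\ 0 < A i, 0 <= C i, 0 < W i & C i + W i <= 1].
Proof.
move=> i1; have /andP[k0 kq] := k_adm _ i1; have /andP[r0 _] := r_in _ i1.
have qR : (0 : R) < (qn r i)%:~R by rewrite ltr0z qn_gt0.
split.
- by rewrite /A ltr0n a_gt0.
- by rewrite /C divr_ge0 ?(ltW qR) ?ler0z.
- by rewrite /W invr_gt0.
- rewrite /C /W -[X in _ + X]mul1r -mulrDl ler_pdivrMr // mul1r.
  by rewrite -intrD1 ler_int; lia.
Qed.

Lemma prob_uniformE (U : set R) : measurable U ->
  P [set w | U (X w)] = lam (U `&` `[0%R, 1%R]%classic).
Proof. by move=> mU; rewrite -uniform_probE // -X_uniform. Qed.

Lemma joint_probE n : joint_prob P Xa B n = lam (windows A C W 1 n `&` `[0%R, 1%R]%classic).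
Proof.
rewrite -prob_uniformE; last exact: (measurable_windows ratio_chain_params).
congr (P _); apply/seteqP; split => w /= h i hi; have := h i; rewrite Ink_fracpartE;
  apply; lia.
Qed.

Lemma marg_probE i : (1 <= i)%N ->
  marg_prob P Xa B i = lam (chain_window A C W i `&` `[0%R, 1%R]%classic).
Proof.
move=> i1; rewrite -prob_uniformE; last exact: measurable_chain_window ratio_chain_params _ i1.
by congr (P _); apply/seteqP; split => w /=; rewrite Ink_fracpartE.
Qed.

Lemma prod_W_le_marg n :
  \prod_(1 <= i < n.+1) W i <= \prod_(1 <= i < n.+1) fine (marg_prob P Xa B i).
Proof.
rewrite big_nat_cond [leRHS]big_nat_cond.
apply: ler_prod => i /andP[/andP[i1 _] _].
have [_ C0 W0 CW] := ratio_chain_params _ i1.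
have mW := measurable_chain_window ratio_chain_params _ i1.
rewrite ltW //= marg_probE //; apply: fine_ge_fin.
  exact: lebesgue_window_natr_ge (a_gt0 _ i1) C0 W0 CW.
rewrite -uniform_probE; last exact: mW.
exact: le_lt_trans (probability_le1 (uniform_prob ltr01) mW) (ltry _).
Qed.

Lemma exponent_le n : \sum_(1 <= i < n) 2 * A i / (W i * A i.+1) <=
  4 * \sum_(1 <= i < n) (a i)%:R / (r i * (a i.+1)%:R).
Proof.
rewrite mulr_sumr big_nat_cond [leRHS]big_nat_cond.
apply: ler_sum => i /andP[/andP[i1 _] _].
have [A0 _ W0 _] := ratio_chain_params _ i1.
have /ratio_chain_params[A0' _ _ _] : (1 <= i.+1)%N by [].
have /r_in/andP[r0 _] := i1.
have qR : (0 : R) < (qn r i)%:~R by rewrite ltr0z qn_gt0.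
have -> : 2 * A i / (W i * A i.+1) = 2 * A i / A i.+1 * (qn r i)%:~R.
  by rewrite /W; field; rewrite !gt_eqF.
have -> : 4 * ((a i)%:R / (r i * (a i.+1)%:R)) = 2 * A i / A i.+1 * (2 / r i).
  by rewrite /A; field; rewrite !gt_eqF.
apply: ler_wpM2l; last exact: qn_le (r_in _ i1).
by rewrite divr_ge0 ?mulr_ge0 ?ltW.
Qed.

Lemma theta_ratio_le n : (1 <= n)%N ->
  fine (joint_prob P Xa B n) / \prod_(1 <= i < n.+1) fine (marg_prob P Xa B i)
  <= 3 * expR (4 * \sum_(1 <= i < n) (a i)%:R / (r i * (a i.+1)%:R)).
Proof.
case: n => [//|n] _.
have PW_gt0 : 0 < \prod_(1 <= i < n.+2) W i.
  rewrite big_nat_cond; apply: prodr_gt0 => i /andP[/andP[i1 _] _].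
  by have [] := ratio_chain_params _ i1.
have PW_le := prod_W_le_marg n.+1.
have A1 : 1 <= A 1 by rewrite /A ler1n a_gt0.
rewrite ler_pdivrMr; last exact: lt_le_trans PW_le.
apply: le_trans (_ : 3 * \prod_(1 <= i < n.+2) W i *
    expR (\sum_(1 <= i < n.+1) 2 * A i / (W i * A i.+1)) <= _).
  rewrite joint_probE; apply: fine_le_fin => //.
  exact: lebesgue_windows_le_exp ratio_chain_params n A1.
rewrite [leRHS]mulrAC; apply: ler_pM.
- by rewrite mulr_ge0 // ltW.
- by rewrite ltW ?expR_gt0.
- by rewrite ler_pM2l.
- by rewrite ler_expR exponent_le.
Qed.

End Ratio.

Theorem proposition5p1 (R : realType) (d : measure_display) (T : measurableType d)
  (P : probability T R) (X : {RV P >-> R})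
  (HX : forall A : set R, measurable A ->
          distribution P X A = uniform_prob (@ltr01 R) A)
  (a : nat -> nat) (r : nat -> R)
  (Ha : forall n, (1 <= n)%N -> (0 < a n)%N)
  (Hr : forall n, (1 <= n)%N -> 0 < r n <= 1) :
  (Theta_r P (fun n w => fracpart ((a n)%:R * X w)%R) r <=
   3%:E * expeR (4%:E * \sum_(1 <= n <oo) ((a n)%:R / (r n * (a n.+1)%:R))%R%:E))%E.
Proof.
apply: ge_ereal_sup => _ [k k_adm <-]; apply: ge_ereal_sup => _ [n n1 <-].
have t_ge0 i : (1 <= i)%N -> 0 <= (a i)%:R / (r i * (a i.+1)%:R) :> R.
  by move=> i1; have /andP[r0 _] := Hr _ i1; rewrite divr_ge0 ?mulr_ge0 ?ler0n ?ltW.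
apply: le_trans (_ : 3%:E * expeR (4%:E *
    (\sum_(1 <= i < n) (a i)%:R / (r i * (a i.+1)%:R))%:E) <= _)%E.
  by rewrite /= -EFinM lee_fin; exact: theta_ratio_le HX Ha Hr k_adm n n1.
rewrite lee_wpmul2l // lee_expeR lee_wpmul2l // -sumEFin.
apply: le_trans (nneseries_lim_ge _ _); first exact: lexx.
by move=> i i1 _; rewrite lee_fin t_ge0.
Qed.
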